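(* Let $\mathcal A$ be a linear time-invariant algorithm with $n$ oracles, state-space realization $(A,B,C,D)$ and transfer function $\hat H(z)$ with entries $h_{ij}(z)$, $1\le i,j\le n$. (a) Suppose $D_{kk}\ne0$ for some $k\in[n]$. Then the transfer function $\hat H'(z)$ of $\mathcal C_k\mathcal A$ has entries $$h'_{ij}(z)=\begin{cases}1/h_{kk}(z)& i=k,\ j=k,\\ -h_{kj}(z)/h_{kk}(z)& i=k,\ j\ne k,\\ h_{ik}(z)/h_{kk}(z)& i\ne k,\ j=k,\\ h_{ij}(z)-h_{ik}(z)h_{kj}(z)/h_{kk}(z)& i\ne k,\ j\ne k.\end{cases}$$ (b) Suppose $D$ is invertible. Then the transfer function $\hat H'(z)$ of $\mathcal C_{[n]}\mathcal A$ satisfies $\hat H'(z)=\hat H^{-1}(z)$.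
   Context: A linear time-invariant algorithm with realization $(A,B,C,D)$ generates $x^{k+1}=Ax^k+Bu^k$, $y^k=Cx^k+Du^k$, $u^k=\phi(y^k)$, where the $n$ oracles are (sub)gradients $\partial f_i$ of convex functions; its transfer function is $\hat H(z)=C(zI-A)^{-1}B+D$. For $\kappa\subseteq[n]=\{1,\dots,n\}$, the conjugation $\mathcal C_\kappa\mathcal A$ is obtained by rewriting $\mathcal A$ to call $\partial f_i^\star=(\partial f_i)^{-1}$ ($f^\star$ the Fenchel conjugate) instead of $\partial f_i$ for each $i\in\kappa$, which swaps the oracle argument and output for those oracles; $\mathcal C_k=\mathcal C_{\{k\}}$. *)

From HB Require Import structures.
From mathcomp Require Import all_boot all_order all_algebra.
Set Implicit Arguments. Unset Strict Implicit. Unset Printing Implicit Defensive.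
Import GRing.Theory.
Local Open Scope ring_scope.

(* A linear time-invariant algorithm with state dimension p and n (scalar)
   oracles, given by a state-space realization (A,B,C,D):
     x^{k+1} = A x^k + B u^k,  y^k = C x^k + D u^k,  u^k_i in df_i(y^k_i). *)
Record lti (F : fieldType) (p n : nat) := LTI {
  ltiA : 'M[F]_p;
  ltiB : 'M[F]_(p, n);
  ltiC : 'M[F]_(n, p);
  ltiD : 'M[F]_n }.

(* Value of the transfer function H(z) = C (zI - A)^{-1} B + D at z
   (meaningful when zI - A is invertible). *)
Definition transfer (F : fieldType) (p n : nat) (S : lti F p n) (z : F)
  : 'M[F]_n :=
  ltiC S *m invmx (z%:M - ltiA S) *m ltiB S + ltiD S.

Definition selmx (F : fieldType) (n : nat) (kappa : {set 'I_n}) : 'M[F]_n :=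
  diag_mx (\row_i (i \in kappa)%:R).

(* Conjugation C_kappa: the oracles i in kappa are replaced by their inverses,
   i.e. the new oracle argument is y'_i = u_i and its output is u'_i = y_i
   (for i notin kappa, y'_i = y_i, u'_i = u_i).  With E = selmx kappa and
   Ebar = 1 - E: u' = E y + Ebar u, y' = E u + Ebar y.  Solving
   y = C x + D u for u: u' = E C x + M u with M = E D + Ebar, so
   u = M^{-1} (u' - E C x), which gives the realization below
   (well defined when M is invertible, i.e. D_{kappa,kappa} invertible). *)
Definition conj_lti (F : fieldType) (p n : nat) (kappa : {set 'I_n})
  (S : lti F p n) : lti F p n :=
  let E := selmx F kappa in
  let Eb := 1%:M - E in
  let Mi := invmx (E *m ltiD S + Eb) in
  let N := E + Eb *m ltiD S in
  LTI (ltiA S - ltiB S *m Mi *m E *m ltiC S)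
      (ltiB S *m Mi)
      (Eb *m ltiC S - N *m Mi *m E *m ltiC S)
      (N *m Mi).

From mathcomp Require Import all_boot all_order all_algebra.
Set Implicit Arguments. Unset Strict Implicit. Unset Printing Implicit Defensive.
Import GRing.Theory.
Local Open Scope ring_scope.

(* With E the 0/1 selector of kappa, the relation
   y = H u becomes y' = H' u' where u' = E y + (1 - E) u and
   y' = E u + (1 - E) y, that is H' (E H + 1 - E) = E + (1 - E) H.  On the
   state-space side this follows from the push-through identity for the
   perturbation A' = A - B K of the state matrix.  For kappa = [n] the
   relation reads H' H = 1; for kappa = {k} it determines H' entrywise as the
   principal pivot transform of H at k. *)

Lemma push_through_invmx (R : comUnitRingType) (p q : nat)
    (Z : 'M[R]_p) (B : 'M[R]_(p, q)) (K : 'M[R]_(q, p)) :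
  Z \in unitmx -> Z + B *m K \in unitmx ->
  invmx (Z + B *m K) *m B *m (1%:M + K *m invmx Z *m B) = invmx Z *m B.
Proof.
move=> UZ UZ'.
have push : (Z + B *m K) *m (invmx Z *m B) = B *m (1%:M + K *m invmx Z *m B).
  by rewrite mulmxDl mulmxA mulmxV // mul1mx mulmxDr mulmx1 !mulmxA.
by rewrite -mulmxA -push mulKmx.
Qed.

Lemma transfer_conj_lti_mul (F : fieldType) (p n : nat) (kappa : {set 'I_n})
    (S : lti F p n) (z : F) :
  selmx F kappa *m ltiD S + (1%:M - selmx F kappa) \in unitmx ->
  z%:M - ltiA S \in unitmx -> z%:M - ltiA (conj_lti kappa S) \in unitmx ->
  transfer (conj_lti kappa S) z *m
      (selmx F kappa *m transfer S z + (1%:M - selmx F kappa))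
    = selmx F kappa + (1%:M - selmx F kappa) *m transfer S z.
Proof.
case: S => A B C D; rewrite /transfer /conj_lti /=.
set E := selmx F kappa; set Eb := 1%:M - E.
set M := E *m D + Eb; set N := E + Eb *m D; set K := invmx M *m E *m C.
move=> UM UZ.
have -> : z%:M - (A - B *m invmx M *m E *m C) = z%:M - A + B *m K.
  by rewrite opprD opprK addrA !mulmxA.
move=> UZ'; set R := invmx (z%:M - A).
have -> : E *m (C *m R *m B + D) + Eb = M + E *m C *m R *m B.
  by rewrite /M mulmxDr -addrA addrC !mulmxA.
have undoM : invmx M *m (M + E *m C *m R *m B) = 1%:M + K *m R *m B.
  by rewrite mulmxDr mulVmx // !mulmxA.
have push := push_through_invmx UZ UZ'; rewrite -/R in push.
have -> : N *m invmx M *m E *m C = N *m K by rewrite !mulmxA.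
set C' := Eb *m C - N *m K; set R' := invmx (z%:M - A + B *m K).
rewrite -/R' in push.
have -> : C' *m R' *m (B *m invmx M) + N *m invmx M = (C' *m R' *m B + N) *m invmx M.
  by rewrite mulmxDl !mulmxA.
(* H' (E H + 1 - E) = (C' R' B + N) (1 + K R B) = C' R B + N (1 + K R B) *)
rewrite -mulmxA undoM mulmxDl.
have -> : C' *m R' *m B *m (1%:M + K *m R *m B) = C' *m R *m B.
  by rewrite -[C' *m R' *m B]mulmxA -mulmxA push mulmxA.
rewrite /C' mulmxBl mulmxBl [N *m (1%:M + _)]mulmxDr mulmx1 !mulmxA.
by rewrite addrCA subrK mulmxDr !mulmxA /N -addrA [Eb *m D + _]addrC.
Qed.

Section PrincipalPivot.

Variables (F : fieldType) (n : nat) (k : 'I_n).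

Local Notation E := (selmx F [set k]).

Definition principal_pivot_mx (H : 'M[F]_n) : 'M[F]_n :=
  \matrix_(i, j)
    if i == k then
      if j == k then 1 / H k k else - (H k j / H k k)
    else
      if j == k then H i k / H k k else H i j - H i k * H k j / H k k.

Lemma mulmx_sel1E (P Q : 'M[F]_n) i j :
  (P *m (E *m Q + (1%:M - E))) i j = (if j == k then 0 else P i j) + P i k * Q k j.
Proof.
rewrite mulmxDr mulmxBr mulmx1 mulmxA /selmx mul_mx_diag !mxE.
rewrite (bigD1 k) //= big1 => [|l /negbTE nlk]; last first.
  by rewrite !mxE in_set1 nlk mulr0 mul0r.
rewrite !mxE !in_set1 eqxx mulr1 addr0.
case: eqP => [-> | _]; first by rewrite mulr1 subrr addr0 add0r.
by rewrite mulr0 subr0 addrC.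
Qed.

Lemma sel1_addE (Q : 'M[F]_n) i j :
  (E + (1%:M - E) *m Q) i j = if i == k then (j == k)%:R else Q i j.
Proof.
rewrite mulmxBl mul1mx /selmx mul_diag_mx !mxE in_set1.
case: eqP => [-> | _] /=; last by rewrite mul0rn mul0r subr0 add0r.
by rewrite mulr1n mul1r subrr addr0 eq_sym.
Qed.

Lemma sel1_unitmx (D : 'M[F]_n) : D k k != 0 -> E *m D + (1%:M - E) \in unitmx.
Proof.
move=> Dkk.
pose X : 'M[F]_n := \matrix_(i, j)
  if i == k then if j == k then 1 / D k k else - (D k j / D k k) else (i == j)%:R.
suff /mulmx1_unit[] : X *m (E *m D + (1%:M - E)) = 1%:M by [].
apply/matrixP => i j; rewrite mulmx_sel1E !mxE.
case: (eqVneq i k) => [-> | nik]; case: (eqVneq j k) => [-> | njk] //=.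
- by rewrite add0r mul1r eqxx mulVf.
- by rewrite eqxx mul1r [_^-1 * _]mulrC addNr.
- by rewrite mul0r addr0 (negbTE nik).
- by rewrite mul0r addr0.
Qed.

Lemma principal_pivot_mxP (G H : 'M[F]_n) :
  G *m (E *m H + (1%:M - E)) = E + (1%:M - E) *m H -> G = principal_pivot_mx H.
Proof.
move=> GH.
have GHE i j : (if j == k then 0 else G i j) + G i k * H k j
               = if i == k then (j == k)%:R else H i j.
  by rewrite -mulmx_sel1E GH sel1_addE.
have GHk i : G i k * H k k = if i == k then 1 else H i k.
  by have := GHE i k; rewrite !eqxx add0r.
have Hkk : H k k != 0.
  by apply: contra_eqN (GHk k) => /eqP->; rewrite eqxx mulr0 eq_sym oner_eq0.
have Gik i : G i k = (if i == k then 1 else H i k) / H k k by rewrite -GHk mulfK.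
apply/matrixP => i j; rewrite mxE.
case: (eqVneq j k) => [-> | njk]; first by rewrite Gik; case: eqP.
have := GHE i j; rewrite (negbTE njk) Gik /= => /(canRL (addrK _)) ->.
by case: eqP => _; [rewrite sub0r mul1r mulrC | rewrite mulrAC].
Qed.

End PrincipalPivot.

Lemma selmx_setT (F : fieldType) (n : nat) : selmx F [set: 'I_n] = 1%:M.
Proof. by apply/matrixP => i j; rewrite !mxE in_setT. Qed.

Lemma transfer_conj_lti_setT (F : fieldType) (p n : nat) (S : lti F p n) (z : F) :
  ltiD S \in unitmx ->
  z%:M - ltiA S \in unitmx -> z%:M - ltiA (conj_lti [set: 'I_n] S) \in unitmx ->
  transfer (conj_lti [set: 'I_n] S) z = invmx (transfer S z).
Proof.
move=> UD UZ UZ'.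
have UM : selmx F [set: 'I_n] *m ltiD S + (1%:M - selmx F [set: 'I_n]) \in unitmx.
  by rewrite selmx_setT mul1mx subrr addr0.
have := transfer_conj_lti_mul UM UZ UZ'.
rewrite selmx_setT mul1mx subrr mul0mx !addr0 => H'H.
have [_ UH] := mulmx1_unit H'H.
by rewrite -(mulmxK UH (transfer _ z)) H'H mul1mx.
Qed.

Theorem corollary8p2 (F : fieldType) (p n : nat) (S : lti F p n) :
  (forall k : 'I_n, ltiD S k k != 0 ->
     forall z : F,
       z%:M - ltiA S \in unitmx ->
       z%:M - ltiA (conj_lti [set k] S) \in unitmx ->
       let h := transfer S z in
       forall i j : 'I_n,
         transfer (conj_lti [set k] S) z i j =
           if i == k then
             if j == k then 1 / h k k else - (h k j / h k k)
           else
             if j == k then h i k / h k k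
             else h i j - h i k * h k j / h k k)
  /\
  (ltiD S \in unitmx ->
     forall z : F,
       z%:M - ltiA S \in unitmx ->
       z%:M - ltiA (conj_lti [set: 'I_n] S) \in unitmx ->
       transfer (conj_lti [set: 'I_n] S) z = invmx (transfer S z)).
Proof.
split=> [k Dkk z UZ UZ' h i j | UD z]; last exact: transfer_conj_lti_setT.
have H'E := transfer_conj_lti_mul (sel1_unitmx Dkk) UZ UZ'.
by rewrite (principal_pivot_mxP H'E) mxE.
Qed.
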